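(* Let $\mathcal{X}=({\bm X},m^{\bm X}_\bullet,\nu^{\bm X})$ and $\mathcal{Y}=({\bm Y},m^{\bm Y}_\bullet,\nu^{\bm Y})$ be stationary finite Markov chains and $C:{\bm X}\times{\bm Y}\to\mathbb{R}_+$ a cost function. Then for every probability distribution $p$ on $\mathbb{N}$, $d^{p}_{\mathrm{OTM}}(\mathcal{X},\mathcal{Y};C)\le d_{\mathrm{OTC}}(\mathcal{X},\mathcal{Y};C)$.
   Context: A finite Markov chain $\mathcal{X}=({\bm X},m^{\bm X}_\bullet,\nu^{\bm X})$ consists of a finite set ${\bm X}$, a transition kernel $m^{\bm X}_\bullet:{\bm X}\to\mathcal{P}({\bm X})$ and an initial distribution $\nu^{\bm X}$; it is stationary if $\nu^{\bm X}$ is a stationary distribution of $m^{\bm X}_\bullet$. $\mathcal{C}(\alpha,\beta)$ denotes the set of couplings of $\alpha,\beta$. A Markovian coupling between $\mathcal{X}$ and $\mathcal{Y}$ is a (possibly time-inhomogeneous) Markov chain $(X_t,Y_t)_{t\in\mathbb{N}}$ on ${\bm X}\times{\bm Y}$ with $\mathrm{law}(X_0,Y_0)\in\mathcal{C}(\nu^{\bm X},\nu^{\bm Y})$ and, for all $t,x,y$, the conditional law of $(X_{t+1},Y_{t+1})$ given $(X_t,Y_t)=(x,y)$ in $\mathcal{C}(m^{\bm X}_x,m^{\bm Y}_y)$; it is time homogeneous if these conditional laws do not depend on $t$. For $p\in\mathcal{P}(\mathbb{N})$ and $T\sim p$, $d^{p}_{\mathrm{OTM}}(\mathcal{X},\mathcal{Y};C)=\inf\mathbb{E}\,C(X_T,Y_T)$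 over all Markovian couplings independent of $T$. The optimal transition coupling distance is $d_{\mathrm{OTC}}(\mathcal{X},\mathcal{Y};C)=\inf\mathbb{E}\,C(X_0,Y_0)$, the infimum over all time homogeneous Markovian couplings whose initial distribution $\mathrm{law}(X_0,Y_0)$ is stationary for the coupled chain. *)

From HB Require Import structures.
From mathcomp Require Import all_boot all_order all_algebra.
From mathcomp Require Import all_classical all_reals all_analysis.
Set Implicit Arguments. Unset Strict Implicit. Unset Printing Implicit Defensive.
Import Order.TTheory GRing.Theory Num.Theory.
Local Open Scope ring_scope.
Local Open Scope classical_set_scope.

Section Defs.
Variable R : realType.

Definition is_prob (T : finType) (mu : {ffun T -> R}) : Prop :=
  (forall x, 0 <= mu x) /\ \sum_(x : T) mu x = 1.

Definition is_prob_nat (p : nat -> R) : Prop :=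
  (forall t, 0 <= p t) /\ series p @ \oo --> (1 : R^o).

Definition coupling (X Y : finType) (a : {ffun X -> R}) (b : {ffun Y -> R})
  (g : {ffun (X * Y)%type -> R}) : Prop :=
  is_prob g /\ (forall x, \sum_(y : Y) g (x, y) = a x)
            /\ (forall y, \sum_(x : X) g (x, y) = b y).

Definition markov_chain (X : finType) (m : X -> {ffun X -> R}) (nu : {ffun X -> R}) : Prop :=
  (forall x, is_prob (m x)) /\ is_prob nu.

Definition stationary (X : finType) (m : X -> {ffun X -> R}) (nu : {ffun X -> R}) : Prop :=
  forall x', \sum_(x : X) nu x * m x x' = nu x'.

(* A (possibly time-inhomogeneous) Markovian coupling, given by the initial
   law g0 of (X_0,Y_0) and the transition kernels K t at each time t. *)
Definition markovian_coupling (X Y : finType)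
  (mX : X -> {ffun X -> R}) (nuX : {ffun X -> R})
  (mY : Y -> {ffun Y -> R}) (nuY : {ffun Y -> R})
  (g0 : {ffun (X * Y)%type -> R}) (K : nat -> (X * Y)%type -> {ffun (X * Y)%type -> R}) : Prop :=
  coupling nuX nuY g0 /\ (forall t x y, coupling (mX x) (mY y) (K t (x, y))).

Fixpoint law_at (Z : finType) (g0 : {ffun Z -> R}) (K : nat -> Z -> {ffun Z -> R}) (t : nat)
  : {ffun Z -> R} :=
  match t with
  | 0 => g0
  | t'.+1 => [ffun z' => \sum_(z : Z) law_at g0 K t' z * K t' z z']
  end.

Definition exp_cost (X Y : finType) (mu : {ffun (X * Y)%type -> R}) (C : X -> Y -> R) : R :=
  \sum_(z : (X * Y)%type) mu z * C z.1 z.2.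

(* d^p_OTM: inf over Markovian couplings of E C(X_T, Y_T), T ~ p independent *)
Definition d_OTM (X Y : finType)
  (mX : X -> {ffun X -> R}) (nuX : {ffun X -> R})
  (mY : Y -> {ffun Y -> R}) (nuY : {ffun Y -> R})
  (C : X -> Y -> R) (p : nat -> R) : R :=
  inf [set v : R | exists g0 K, markovian_coupling mX nuX mY nuY g0 K /\
        v = limn (series (fun t => p t * exp_cost (law_at g0 K t) C : R^o))].

Definition d_OTC (X Y : finType)
  (mX : X -> {ffun X -> R}) (nuX : {ffun X -> R})
  (mY : Y -> {ffun Y -> R}) (nuY : {ffun Y -> R})
  (C : X -> Y -> R) : R :=
  inf [set v : R | exists (g0 : {ffun (X * Y)%type -> R})
                          (K : (X * Y)%type -> {ffun (X * Y)%type -> R}),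
        markovian_coupling mX nuX mY nuY g0 (fun _ => K) /\ stationary K g0 /\
        v = exp_cost g0 C].

End Defs.

(** A stationary time-homogeneous coupling keeps the law of (X_t, Y_t) equal to
    its initial law at every time, so its expected cost at an independent
    random time T is its expected cost at time 0.  Hence every value in the
    set defining d_OTC also occurs in the set defining d_OTM, and the infimum
    over the larger set is smaller.  The OTC set is nonempty because the
    independent coupling of the two stationary chains is admissible. *)
From HB Require Import structures.
From mathcomp Require Import all_boot all_order all_algebra.
From mathcomp Require Import all_classical all_reals all_analysis.
Set Implicit Arguments. Unset Strict Implicit.
Import Order.TTheory GRing.Theory Num.Theory.
Local Open Scope ring_scope.
Local Open Scope classical_set_scope.

Section Infimum.
Variable R : realType.

(* The nonnegativity of [B] only matters when [A] has no infimum: then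
   [inf A] is the junk value [0]. *)
Lemma inf_subset_le (A B : set R) :
  B `<=` A -> B !=set0 -> lbound B 0 -> inf A <= inf B.
Proof.
move=> BA B0 B_ge0; have [infA|/inf_out->] := pselect (has_inf A).
  apply: inf_le => // _ [x Bx <-]; apply/downP.
  by exists (- x) => //; exists x => //; apply: BA.
exact: lb_le_inf.
Qed.

Lemma limn_series_prob_mulr (p : nat -> R) (v : R) : is_prob_nat p ->
  limn (series (fun t => p t * v : R^o)) = v.
Proof.
move=> [_ p_cvg1].
have -> : series (fun t => p t * v : R^o) = (fun n => series p n * v).
  by apply/funext => n; rewrite /series /= big_distrl.
by apply: cvg_lim => //; rewrite -[X in _ --> X]mul1r; apply: cvgMr_tmp.
Qed.

End Infimum.

Section StationaryLaw.
Variables (R : realType) (Z : finType).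

Lemma law_at_stationary (g0 : {ffun Z -> R}) (K : Z -> {ffun Z -> R}) :
  stationary K g0 -> forall t, law_at g0 (fun=> K) t = g0.
Proof.
move=> g0_stat; elim=> [//|t IH] /=; apply/ffunP => z.
by rewrite ffunE IH; apply: g0_stat.
Qed.

End StationaryLaw.

Section IndependentCoupling.
Variables (R : realType) (X Y : finType).

Definition prod_law (a : {ffun X -> R}) (b : {ffun Y -> R}) :
  {ffun (X * Y)%type -> R} := [ffun z => a z.1 * b z.2].

Definition prod_kernel (mX : X -> {ffun X -> R}) (mY : Y -> {ffun Y -> R})
  (z : (X * Y)%type) : {ffun (X * Y)%type -> R} := prod_law (mX z.1) (mY z.2).

Lemma prod_law_coupling (a : {ffun X -> R}) (b : {ffun Y -> R}) :
  is_prob a -> is_prob b -> coupling a b (prod_law a b).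
Proof.
move=> [a_ge0 a_sum1] [b_ge0 b_sum1].
have row_sum x : \sum_(y : Y) prod_law a b (x, y) = a x.
  by under eq_bigr do rewrite ffunE /=; rewrite -mulr_sumr b_sum1 mulr1.
have col_sum y : \sum_(x : X) prod_law a b (x, y) = b y.
  by under eq_bigr do rewrite ffunE /=; rewrite -mulr_suml a_sum1 mul1r.
split; [split | exact: (conj row_sum col_sum)].
- by move=> z; rewrite ffunE mulr_ge0.
- rewrite (eq_bigr (fun z => prod_law a b (z.1, z.2))); last by case.
  by rewrite -(pair_bigA _ (fun x y => prod_law a b (x, y))) /=;
    under eq_bigr do rewrite row_sum.
Qed.

Lemma prod_law_stationary (mX : X -> {ffun X -> R}) (nuX : {ffun X -> R})
    (mY : Y -> {ffun Y -> R}) (nuY : {ffun Y -> R}) :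
  stationary mX nuX -> stationary mY nuY ->
  stationary (prod_kernel mX mY) (prod_law nuX nuY).
Proof.
move=> statX statY [x' y'].
rewrite [RHS]ffunE /= -statX -statY mulr_suml.
rewrite (eq_bigr (fun z => nuX z.1 * mX z.1 x' * (nuY z.2 * mY z.2 y'))).
  rewrite -(pair_bigA _ (fun x y => nuX x * mX x x' * (nuY y * mY y y'))) /=.
  by apply: eq_bigr => x _; rewrite mulr_sumr.
by move=> z _; rewrite !ffunE mulrACA.
Qed.

Lemma exp_cost_ge0 (mu : {ffun (X * Y)%type -> R}) (C : X -> Y -> R) :
  is_prob mu -> (forall x y, 0 <= C x y) -> 0 <= exp_cost mu C.
Proof. by move=> [mu_ge0 _] C_ge0; apply: sumr_ge0 => z _; rewrite mulr_ge0. Qed.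

End IndependentCoupling.

Theorem proposition7 (R : realType) (X Y : finType)
  (mX : X -> {ffun X -> R}) (nuX : {ffun X -> R})
  (mY : Y -> {ffun Y -> R}) (nuY : {ffun Y -> R})
  (C : X -> Y -> R) :
  markov_chain mX nuX -> stationary mX nuX ->
  markov_chain mY nuY -> stationary mY nuY ->
  (forall x y, 0 <= C x y) ->
  forall p : nat -> R, is_prob_nat p ->
  d_OTM mX nuX mY nuY C p <= d_OTC mX nuX mY nuY C.
Proof.
move=> [mX_prob nuX_prob] statX [mY_prob nuY_prob] statY C_ge0 p p_prob.
apply: inf_subset_le.
- move=> _ [g0 [K [coupl [g0_stat ->]]]]; exists g0, (fun=> K); split => //.
  under eq_fun do rewrite law_at_stationary //.
  by rewrite limn_series_prob_mulr.
- exists (exp_cost (prod_law nuX nuY) C), (prod_law nuX nuY), (prod_kernel mX mY).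
  split; last by split => //; apply: prod_law_stationary.
  by split=> [|_ x y]; apply: prod_law_coupling.
- by move=> _ [g0 [K [[[g0_prob _] _] [_ ->]]]]; apply: exp_cost_ge0.
Qed.
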